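(* Let $G=C_n$ be a cycle, for some $n\ge3$, and let $L$ be a list-assignment with $|L(v)|=3$ for every vertex $v$. If $\alpha$ and $\beta$ are $L$-colourings, neither of which is frozen, and the lists $L(v)$ are not all identical, then $\alpha\sim\beta$.
   Context: An $L$-colouring is a proper colouring $\varphi$ with $\varphi(v)\in L(v)$ for all $v$. A vertex $v$ is frozen under $\varphi$ if every colour of $L(v)\setminus\{\varphi(v)\}$ appears on a neighbour of $v$; a colouring is frozen if all vertices are frozen. $\alpha\sim\beta$ means $\alpha$ can be transformed into $\beta$ by a sequence of single-vertex recolouring steps, each changing one vertex's colour to another colour of its list so that the colouring remains a proper $L$-colouring. *)

From mathcomp Require Import all_boot.
From Stdlib Require Import Relations.
Set Implicit Arguments. Unset Strict Implicit. Unset Printing Implicit Defensive.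

Definition cycle_adj (n : nat) (i j : 'I_n) : bool :=
  (val j == (val i).+1 %% n) || (val i == (val j).+1 %% n).

(* Colours are natural numbers; a list assignment gives each vertex a list
   (finite set, represented as a duplicate-free seq) of colours. *)
Definition Lcolouring (n : nat) (L : 'I_n -> seq nat) (phi : 'I_n -> nat) : Prop :=
  (forall v, phi v \in L v) /\
  (forall u v, cycle_adj u v -> phi u != phi v).

Definition frozen_vertex (n : nat) (L : 'I_n -> seq nat) (phi : 'I_n -> nat) (v : 'I_n) : Prop :=
  forall c, c \in L v -> c != phi v -> exists u, cycle_adj u v /\ phi u = c.

Definition frozen (n : nat) (L : 'I_n -> seq nat) (phi : 'I_n -> nat) : Prop :=
  forall v, frozen_vertex L phi v.

Definition recolour_step (n : nat) (L : 'I_n -> seq nat) (a b : 'I_n -> nat) : Prop :=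
  Lcolouring L a /\ Lcolouring L b /\
  exists v, a v != b v /\ forall u, u != v -> a u = b u.

Definition reconfig (n : nat) (L : 'I_n -> seq nat) : relation ('I_n -> nat) :=
  clos_refl_trans _ (@recolour_step n L).

From mathcomp Require Import all_boot zify.
From Stdlib Require Import Relations Classical FunctionalExtensionality.
Set Implicit Arguments. Unset Strict Implicit. Unset Printing Implicit Defensive.

(* Pick a vertex u and a colour c in L(u) \ L(u+1), which exists as the lists
   are not all equal.  In a colouring that is not frozen, a free vertex can be
   moved backwards along the cycle: if v is frozen and v+1 is free, recolouring
   v+1 frees v.  Freeing u-1 lets us make u-1 avoid c and then recolour u to c,
   since u+1 can never carry c.  Once u has colour c, its successor u+1 is no
   longer constrained by u, so the rest of the cycle behaves like a path
   u+1, ..., u-1 on which any target colouring is reached by fixing the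
   vertices from u-1 down to u+1, each time first moving the predecessor out of
   the way by the same procedure.  Both alpha and beta reach colourings giving
   u the colour c, and these are connected. *)

Lemma seq_avoid2 (T : eqType) (s : seq T) (x y : T) :
  uniq s -> 2 < size s -> exists2 e, e \in s & e \notin [:: x; y].
Proof.
move=> s_uniq s_gt2; apply/hasP/negPn/negP => /hasPn s_sub.
have := uniq_leq_size s_uniq (fun e es => negbNE (s_sub e es)).
by rewrite leqNgt s_gt2.
Qed.

Lemma not_eq_mem_witness (T : eqType) (s1 s2 : seq T) :
  uniq s1 -> size s2 <= size s1 -> ~ s1 =i s2 -> exists2 x, x \in s1 & x \notin s2.
Proof.
move=> s1_uniq le_s21 neq_s12; apply/hasP/negPn/negP => /hasPn s1_sub.
by apply: neq_s12; case: (uniq_min_size s1_uniq (fun x xs => negbNE (s1_sub x xs)) le_s21).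
Qed.

#[local] Arguments ordS {n}.
#[local] Arguments ord_pred {n}.

Section CycleWalk.
Variable n : nat.

Lemma cycle_adj_sym (x y : 'I_n) : cycle_adj x y = cycle_adj y x.
Proof. by rewrite /cycle_adj orbC. Qed.

Lemma cycle_adjE (y v : 'I_n) : cycle_adj y v = (y == ord_pred v) || (y == ordS v).
Proof.
rewrite /cycle_adj; congr (_ || _).
by rewrite -[_ == _]/(v == ordS y) eq_sym (canF_eq (@ordSK n)).
Qed.

Lemma cycle_adj_ordS (v : 'I_n) : cycle_adj v (ordS v).
Proof. by rewrite cycle_adjE ordSK eqxx. Qed.

Lemma iter_ordS_val (u : 'I_n) i : val (iter i ordS u) = (u + i) %% n.
Proof.
elim: i => [|i IH]; first by rewrite addn0 modn_small.
by rewrite iterS /= IH addnS -addn1 modnDml addn1.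
Qed.

Lemma iter_ordS_n (u : 'I_n) : iter n ordS u = u.
Proof. by apply: val_inj; rewrite iter_ordS_val modnDr modn_small. Qed.

Lemma iter_ordS_onto (u z : 'I_n) : exists2 i, 0 < i <= n & z = iter i ordS u.
Proof.
have n_gt0 : 0 < n by apply: leq_ltn_trans (ltn_ord z).
exists ((z + n - u.+1) %% n).+1; first by rewrite ltn_mod n_gt0.
apply: val_inj; rewrite iter_ordS_val addnS -addSn modnDmr.
have -> : u.+1 + (z + n - u.+1) = z + n by have := ltn_ord u; lia.
by rewrite modnDr modn_small.
Qed.

Lemma iter_ordS_neq (v : 'I_n) a b :
  a < b < a + n -> iter b ordS v != iter a ordS v.
Proof.
move=> /andP[lt_ab lt_b]; rewrite -(subnK (ltnW lt_ab)) iterD.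
set w := iter a ordS v; apply/eqP => /(congr1 val) /eqP /=.
rewrite iter_ordS_val -{2}(modn_small (ltn_ord w)) -{2}[nat_of_ord w]addn0 eqn_modDl.
by rewrite mod0n modn_small; lia.
Qed.

Lemma eq_mem_cycle (T : eqType) (s : 'I_n -> seq T) :
  (forall v, s v =i s (ordS v)) -> forall u v, s u =i s v.
Proof.
move=> s_succ u v; have [i _ ->] := iter_ordS_onto u v.
by elim: i => [|i IH] // x; rewrite IH iterS s_succ.
Qed.

End CycleWalk.

Section Recolouring.
Variables (n : nat) (L : 'I_n -> seq nat).

Definition recolour (phi : 'I_n -> nat) (w : 'I_n) (d : nat) : 'I_n -> nat :=
  fun z => if z == w then d else phi z.

Lemma recolour_at phi w d : recolour phi w d w = d.
Proof. by rewrite /recolour eqxx. Qed.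

Lemma recolour_ne phi w d z : z != w -> recolour phi w d z = phi z.
Proof. by rewrite /recolour => /negbTE ->. Qed.

Lemma reconfig_sym phi psi : reconfig L phi psi -> reconfig L psi phi.
Proof.
elim=> [x y [cx [cy [v [xv xy]]]] | x | x y z _ IHxy _ IHyz].
- apply: rt_step; do 2!split=> //; exists v; split; first by rewrite eq_sym.
  by move=> z /xy ->.
- exact: rt_refl.
- exact: rt_trans IHyz IHxy.
Qed.

Lemma reconfig_Lcolouring phi psi :
  Lcolouring L phi -> reconfig L phi psi -> Lcolouring L psi.
Proof.
move=> + r; elim: r => [x y [_ [cy _]] | // | x y z _ IHxy _ IHyz] //.
by move=> cx; exact/IHyz/IHxy.
Qed.

Lemma recolour_reconfig phi v d :
  Lcolouring L phi -> d \in L v -> phi (ord_pred v) != d -> phi (ordS v) != d ->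
  reconfig L phi (recolour phi v d).
Proof.
move=> [phiL phi_proper] dL pd sd.
have nbr_d y : cycle_adj y v -> phi y != d by rewrite cycle_adjE => /orP[] /eqP ->.
have [dv | dv] := eqVneq d (phi v).
  have -> : recolour phi v d = phi.
    by apply: functional_extensionality => z; rewrite /recolour; case: eqP => [->|].
  exact: rt_refl.
apply: rt_step; split; first by split.
split; last by exists v; split; [rewrite recolour_at eq_sym | move=> z /recolour_ne ->].
split=> [z | a b ab]; first by rewrite /recolour; case: eqP => [->|].
rewrite /recolour; case: (eqVneq a v) => [av|av]; case: (eqVneq b v) => [bv|bv].
- by have := phi_proper a b ab; rewrite av bv eqxx.
- by rewrite eq_sym nbr_d // cycle_adj_sym -av.
- by rewrite nbr_d // -bv.
- exact: phi_proper.
Qed.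

Lemma not_frozen_vertexP phi v : ~ frozen_vertex L phi v ->
  exists2 e, e \in L v & [/\ e != phi v, phi (ord_pred v) != e & phi (ordS v) != e].
Proof.
move=> nfv; apply: NNPP => no_e; apply: nfv => e eL ev.
have [pe | pe] := eqVneq (phi (ord_pred v)) e.
  by exists (ord_pred v); rewrite cycle_adjE eqxx.
have [se | se] := eqVneq (phi (ordS v)) e; first by exists (ordS v); rewrite cycle_adjE eqxx orbT.
by case: no_e; exists e.
Qed.

Hypothesis L_uniq3 : forall v, uniq (L v) /\ size (L v) = 3.

Lemma frozen_vertex_succ phi v : frozen_vertex L phi v ->
  [/\ phi (ordS v) \in L v, phi (ordS v) != phi v & phi (ord_pred v) != phi (ordS v)].
Proof.
move=> fv; have [L_uniq L_size] := L_uniq3 v.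
have [e eL] := seq_avoid2 (phi v) (phi (ord_pred v)) L_uniq (ltac:(by rewrite L_size)).
rewrite !inE negb_or => /andP[ev ep].
have [y [yv ye]] := fv e eL ev.
move: yv; rewrite cycle_adjE => /orP[/eqP yp | /eqP ys].
  by move: ep; rewrite -ye yp eqxx.
by rewrite -ys ye; split; rewrite // eq_sym.
Qed.

Lemma recolour_succ_unfreeze phi v d : frozen_vertex L phi v -> d != phi (ordS v) ->
  ~ frozen_vertex L (recolour phi (ordS v) d) v.
Proof.
move=> /frozen_vertex_succ [sL sv ps] ds fv'.
have s_new : phi (ordS v) != recolour phi (ordS v) d v.
  by rewrite /recolour; case: ifP => _; first rewrite eq_sym.
have [y [yv ye]] := fv' _ sL s_new.
move: yv ye; rewrite cycle_adjE /recolour => /orP[] /eqP ->.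
  by case: ifP => _ /eqP; rewrite ?(negbTE ds) ?(negbTE ps).
by rewrite eqxx => /eqP; rewrite (negbTE ds).
Qed.

Lemma reconfig_unfreeze phi x : Lcolouring L phi -> ~ frozen L phi ->
  exists2 psi, reconfig L phi psi & ~ frozen_vertex L psi x.
Proof.
move=> col /not_all_ex_not [v]; have [k _ ->] := iter_ordS_onto x v.
elim: k phi col => [|k IH] phi col; first by exists phi; first exact: rt_refl.
rewrite iterS; set w := iter k ordS x => nfs.
have [fw | nfw] := classic (frozen_vertex L phi w); last exact: IH.
have [d dL [ds dp dss]] := not_frozen_vertexP nfs.
have r := recolour_reconfig col dL dp dss.
have [psi r' nfx] := IH _ (reconfig_Lcolouring col r) (recolour_succ_unfreeze fw ds).
by exists psi; first exact: rt_trans r r'.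
Qed.

Section FixedColour.
Variables (u : 'I_n) (c : nat).
Hypothesis c_notin : c \notin L (ordS u).

Lemma reconfig_colour_at phi : c \in L u -> Lcolouring L phi -> ~ frozen L phi ->
  exists2 psi, reconfig L phi psi & psi u = c.
Proof.
move=> cL col nf.
have [psi1 r1 nf1] := reconfig_unfreeze (ord_pred u) col nf.
have col1 := reconfig_Lcolouring col r1.
have [psi2 r2 pc] : exists2 psi2, reconfig L phi psi2 & psi2 (ord_pred u) != c.
  have [e eL [ep pe se]] := not_frozen_vertexP nf1.
  have [pc | ] := eqVneq (psi1 (ord_pred u)) c; last by exists psi1.
  exists (recolour psi1 (ord_pred u) e); last by rewrite recolour_at -pc.
  exact: rt_trans r1 (recolour_reconfig col1 eL pe se).
have col2 := reconfig_Lcolouring col r2.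
have sc : psi2 (ordS u) != c by apply: contraNneq c_notin => <-; case: col2.
exists (recolour psi2 u c); last exact: recolour_at.
exact: rt_trans r2 (recolour_reconfig col2 cL pc sc).
Qed.

Definition agree_beyond (k : nat) (phi psi : 'I_n -> nat) : Prop :=
  forall i, k < i <= n -> phi (iter i ordS u) = psi (iter i ordS u).

Lemma reconfig_set_colour j : 0 < j < n ->
  forall phi d, Lcolouring L phi -> phi u = c ->
  d \in L (iter j ordS u) -> d != phi (iter j.+1 ordS u) ->
  exists2 psi, reconfig L phi psi & psi (iter j ordS u) = d /\ agree_beyond j psi phi.
Proof.
elim: j => [// | j IH] /andP[_ jn] phi d col phiu dL dS.
have [phi1 r1 [pd agr1]] : exists2 phi1, reconfig L phi phi1 &
    phi1 (iter j ordS u) != d /\ agree_beyond j phi1 phi.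
  have [pd | pd] := eqVneq (phi (iter j ordS u)) d; last by exists phi; first exact: rt_refl.
  have [j0 | j_gt0] := posnP j.
    by move: pd dL; rewrite j0 /= phiu => <- /(negP c_notin).
  have [L_uniq L_size] := L_uniq3 (iter j ordS u).
  have [e eL] := seq_avoid2 d (phi (iter j.+1 ordS u)) L_uniq (ltac:(by rewrite L_size)).
  rewrite !inE negb_or => /andP[ed eS].
  have [phi1 r1 [pe agr1]] := IH (ltac:(lia)) phi e col phiu eL eS.
  by exists phi1 => //; rewrite pe.
have col1 := reconfig_Lcolouring col r1.
have dS1 : phi1 (iter j.+2 ordS u) != d by rewrite agr1 1?eq_sym //; lia.
have dp1 : phi1 (ord_pred (iter j.+1 ordS u)) != d by rewrite iterS ordSK.
exists (recolour phi1 (iter j.+1 ordS u) d).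
  exact: rt_trans r1 (recolour_reconfig col1 dL dp1 dS1).
split=> [|i /andP[ji iN]]; first exact: recolour_at.
rewrite recolour_ne ?agr1 ?iter_ordS_neq //; lia.
Qed.

Variable beta : 'I_n -> nat.
Hypotheses (beta_col : Lcolouring L beta) (beta_u : beta u = c).

Lemma reconfig_agree_beyond k : k < n ->
  forall phi, Lcolouring L phi -> agree_beyond k phi beta -> reconfig L phi beta.
Proof.
elim: k => [|k IH] kn phi col agr.
  have -> : phi = beta; last exact: rt_refl.
  apply: functional_extensionality => z.
  by have [i i_in ->] := iter_ordS_onto u z; apply: agr.
have phiu : phi u = c.
  by rewrite -beta_u -{1}(iter_ordS_n u) agr ?iter_ordS_n // kn leqnn.
have [beta_L beta_proper] := beta_col.
have dS : beta (iter k.+1 ordS u) != phi (iter k.+2 ordS u).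
  by rewrite [phi _]agr ?beta_proper ?cycle_adj_ordS // ltnSn.
have [psi r [pd agr']] := reconfig_set_colour (j := k.+1) kn col phiu (beta_L _) dS.
apply: rt_trans r (IH (ltnW kn) _ (reconfig_Lcolouring col r) _).
move=> i /andP[ki iN]; have [-> // | ik] := eqVneq i k.+1.
by rewrite agr' ?agr //; lia.
Qed.

End FixedColour.
End Recolouring.

Theorem mainTheorem12 (n : nat) (L : 'I_n -> seq nat) (alpha beta : 'I_n -> nat) :
  3 <= n ->
  (forall v, uniq (L v) /\ size (L v) = 3) ->
  (exists u v, ~ (L u =i L v)) ->
  Lcolouring L alpha -> Lcolouring L beta ->
  ~ frozen L alpha -> ~ frozen L beta ->
  reconfig L alpha beta.
Proof.
move=> _ L_uniq3 [u0 [v0 L_neq]] alpha_col beta_col alpha_nf beta_nf.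
have [u L_neq_succ] : exists u, ~ L u =i L (ordS u).
  by apply: not_all_ex_not => L_succ; apply/L_neq/eq_mem_cycle.
have [c cL c_notin] : exists2 c, c \in L u & c \notin L (ordS u).
  have [[L_uniq L_size] [_ L_size_succ]] := (L_uniq3 u, L_uniq3 (ordS u)).
  by apply: not_eq_mem_witness L_neq_succ; rewrite ?L_size ?L_size_succ.
have [alpha' r_alpha alpha'_u] := reconfig_colour_at L_uniq3 c_notin cL alpha_col alpha_nf.
have [beta' r_beta beta'_u] := reconfig_colour_at L_uniq3 c_notin cL beta_col beta_nf.
have alpha'_col := reconfig_Lcolouring alpha_col r_alpha.
have beta'_col := reconfig_Lcolouring beta_col r_beta.
apply: rt_trans r_alpha _; apply: rt_trans _ (reconfig_sym r_beta).
have n_gt0 : 0 < n by apply: leq_ltn_trans (ltn_ord u).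
apply: (reconfig_agree_beyond L_uniq3 c_notin beta'_col beta'_u (k := n.-1)) => //.
  by rewrite prednK.
move=> i /andP[lt_i le_i]; have -> : i = n by lia.
by rewrite iter_ordS_n alpha'_u beta'_u.
Qed.
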